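(* Let $c \geq 5$ be an integer, let $G$ be a graph, and let $v$ be a vertex of $G$ that has odd degree or has a neighbor of degree at most $2$. Let $Y=\{v\}\cup N_1(v)\cup N_2(v)$. If $G$ has no odd $c$-coloring, but $(G,Y)$ has a semi-odd $c$-coloring, then $2d(v) \geq 2n_1(v) + n_2(v) + n_e(v) + c$.
   Context: $N_d(v)$ is the set of neighbors of $v$ of degree exactly $d$, $n_d(v)=|N_d(v)|$, and $d(v)$ is the degree of $v$. A vertex is easy if it has degree at least $3$ and either has odd degree or has a neighbor of degree at most $2$; $n_e(v)$ is the number of easy neighbors of $v$. An odd color of a vertex (under a partial coloring) is a color appearing an odd number of times among its colored neighbors. An odd $c$-coloring of a graph is a proper coloring with at most $c$ colors in which every non-isolated vertex has an odd color. For $Y\subseteq V(G)$, a semi-odd $c$-coloring of $(G,Y)$ is a proper $c$-coloring $\phi$ of $G-Y$ such that every vertex of $G-Y$ not in $N_G(Y)$ has a color appearing an odd number of times (under $\phi$) in its neighborhood. *)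

(* A finite simple graph is a symmetric irreflexive relation
   e : rel T on a finite vertex type T. *)
From mathcomp Require Import all_boot all_order.
Set Implicit Arguments. Unset Strict Implicit. Unset Printing Implicit Defensive.

Section Graphs.
Variable T : finType.
Variable e : rel T.

Definition deg (v : T) : nat := #|[set u | e v u]|.

Definition Nd (d : nat) (v : T) : {set T} := [set u | e v u & deg u == d].
Definition nd (d : nat) (v : T) : nat := #|Nd d v|.

Definition easy (v : T) : bool :=
  (3 <= deg v) && (odd (deg v) || [exists w, e v w && (deg w <= 2)]).

Definition ne (v : T) : nat := #|[set u | e v u & easy u]|.

Definition odd_coloring (c : nat) (f : T -> 'I_c) : Prop :=
  (forall x y, e x y -> f x != f y) /\
  (forall x, (exists y, e x y) ->
     exists k : 'I_c, odd #|[set u | e x u & f u == k]|).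

Definition has_odd_coloring (c : nat) : Prop :=
  exists f : T -> 'I_c, odd_coloring f.

(* semi-odd c-coloring of (G, Y): f is a proper c-coloring of G - Y
   (values of f on Y are irrelevant), and every vertex x of G - Y that is not
   in N_G(Y) has a color appearing an odd number of times among its colored
   neighbors (neighbors in G - Y). *)
Definition semi_odd_coloring (c : nat) (Y : {set T}) (f : T -> 'I_c) : Prop :=
  (forall x y, x \notin Y -> y \notin Y -> e x y -> f x != f y) /\
  (forall x, x \notin Y -> (forall y, y \in Y -> ~~ e x y) ->
     exists k : 'I_c, odd #|[set u | e x u & (u \notin Y) && (f u == k)]|).

Definition has_semi_odd_coloring (c : nat) (Y : {set T}) : Prop :=
  exists f : T -> 'I_c, semi_odd_coloring Y f.

End Graphs.

From mathcomp Require Import all_boot all_order zify.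
Set Implicit Arguments. Unset Strict Implicit. Unset Printing Implicit Defensive.

(* Suppose the inequality fails.  Give v a colour a avoiding the colours of its
   neighbours of degree at least 3, the unique colour (if any) that would leave a
   non-easy such neighbour without an odd colour, and the colour of the other
   neighbour of each degree-2 neighbour.  As d(v) = n_1 + n_2 + n_{>=3} and
   n_{>=3} = n_e + (number of non-easy neighbours of degree >= 3), the failed
   inequality says that fewer than c colours are forbidden.  The colouring is then
   proper on vertices of degree at least 3 and odd at every vertex whose
   neighbours all have degree at least 3.  The vertices of degree at most 2 are
   then recoloured greedily: each of their at most two neighbours forbids its own
   colour and one killing colour, and c >= 5 leaves a choice.  The result is an
   odd c-colouring of G. *)

Lemma exists_notin_card_lt c (F : {set 'I_c}) : #|F| < c -> exists x, x \notin F.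
Proof.
move=> ltFc; have: 0 < #|~: F| by move: (cardsC F); rewrite card_ord; lia.
by case/card_gt0P=> x; rewrite inE; exists x.
Qed.

Section OddColorings.
Variables (T : finType) (e : rel T).

Definition color_class c (g : T -> 'I_c) w (k : 'I_c) : {set T} :=
  [set u | e w u & g u == k].

Definition has_odd_color c (g : T -> 'I_c) w := exists k, odd #|color_class g w k|.

Lemma deg_sum_color_classes c (g : T -> 'I_c) w :
  deg e w = \sum_(k < c) #|color_class g w k|.
Proof.
rewrite /deg -sum1_card (partition_big g xpredT) //=.
by apply: eq_bigr => k _; rewrite -sum1_card; apply: eq_bigl => u; rewrite !inE.
Qed.

Lemma odd_deg_has_odd_color c (g : T -> 'I_c) w : odd (deg e w) -> has_odd_color g w.
Proof.
move=> odd_w; have [/existsP [k odd_k] | no_odd] :=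
  boolP [exists k, odd #|color_class g w k|]; first by exists k.
have even_sum : 2 %| \sum_(k < c) #|color_class g w k|.
  apply: dvdn_sum => k _; rewrite dvdn2.
  by apply: contra no_odd => odd_k; apply/existsP; exists k.
by move: odd_w even_sum; rewrite (deg_sum_color_classes g) dvdn2 => ->.
Qed.

Definition recolor c (g : T -> 'I_c) s x : T -> 'I_c :=
  fun u => if u == s then x else g u.

Definition kills_odd_colors c (g : T -> 'I_c) s w x :=
  [forall k, ~~ odd #|color_class (recolor g s x) w k|].

Lemma recolor_other c (g : T -> 'I_c) s x u : u != s -> recolor g s x u = g u.
Proof. by rewrite /recolor => /negbTE ->. Qed.

(* Changing the colour of a neighbour [s] of [w] from [x2] to [x1] changes the
   size of the [x1]-class of [w] by exactly one. *)
Lemma kills_odd_colors_uniq c (g : T -> 'I_c) s w x1 x2 : e w s ->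
  kills_odd_colors g s w x1 -> kills_odd_colors g s w x2 -> x1 = x2.
Proof.
move=> ews /forallP kill1 /forallP kill2; apply/eqP/negPn/negP => x12.
have class_x1 : color_class (recolor g s x1) w x1 =
                s |: color_class (recolor g s x2) w x1.
  apply/setP => u; rewrite !inE /recolor.
  by case: (u =P s) => [->|] //=; rewrite ews eqxx.
move: (kill1 x1) (kill2 x1); rewrite class_x1 cardsU1 !inE /recolor eqxx.
by rewrite eq_sym (negbTE x12) andbF add1n /= negbK => ->.
Qed.

Lemma has_odd_color_recolor c (g : T -> 'I_c) s w x :
  ~~ kills_odd_colors g s w x -> has_odd_color (recolor g s x) w.
Proof. by rewrite negb_forall => /existsP [k]; rewrite negbK; exists k. Qed.

(* The vertices of [S] are still to be (re)coloured: properness and the odd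
   condition are only required away from [S]. *)
Definition partial_odd_coloring c (S : {set T}) (g : T -> 'I_c) :=
  (forall x y, x \notin S -> y \notin S -> e x y -> g x != g y) /\
  (forall w, (forall y, e w y -> y \notin S) -> (exists y, e w y) ->
     has_odd_color g w).

Definition killer_color c (g : T -> 'I_c) s w :=
  odflt (g w) [pick x | kills_odd_colors g s w x].

Lemma killer_colorP c (g : T -> 'I_c) s w x :
  e w s -> kills_odd_colors g s w x -> killer_color g s w = x.
Proof.
move=> ews kill_x; rewrite /killer_color; case: pickP => [y kill_y|no_kill].
  exact: kills_odd_colors_uniq ews kill_y kill_x.
by rewrite no_kill in kill_x.
Qed.

Section Greedy.
Hypotheses (sym_e : symmetric e) (irr_e : irreflexive e).

Lemma partial_odd_coloring_recolor c (S : {set T}) (g : T -> 'I_c) s :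
  4 < c -> s \in S -> deg e s <= 2 -> partial_odd_coloring S g ->
  exists x, partial_odd_coloring (S :\ s) (recolor g s x).
Proof.
move=> c_gt4 sS deg_s [g_proper g_odd].
pose N := [set u | e s u].
have small : #|(g @: N) :|: (killer_color g s @: N)| < c.
  rewrite cardsU; move: (leq_imset_card g N) (leq_imset_card (killer_color g s) N).
  by move: deg_s; rewrite /deg -/N; lia.
have [x] := exists_notin_card_lt small; rewrite inE negb_or => /andP [x_nb x_kill].
exists x; split.
- move=> a b; rewrite !inE !negb_and !negbK => a_out b_out.
  have [->|as_] := eqVneq a s; have [->|bs] := eqVneq b s => eab.
  + by rewrite irr_e in eab.
  + rewrite /recolor eqxx (negbTE bs); apply: contraNneq x_nb => ->.
    by apply: imset_f; rewrite inE.
  + rewrite /recolor eqxx (negbTE as_); apply: contraNneq x_nb => <-.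
    by apply: imset_f; rewrite inE sym_e.
  + rewrite !recolor_other //; apply: g_proper eab.
    * by move: a_out; rewrite (negbTE as_).
    * by move: b_out; rewrite (negbTE bs).
- move=> w w_out w_nb; have [ews|news] := boolP (e w s).
    apply: has_odd_color_recolor; apply: contra x_kill => kill_x.
    by apply/imsetP; exists w; [rewrite inE sym_e | rewrite (killer_colorP ews kill_x)].
  have [|k odd_k] := g_odd w _ w_nb.
    move=> y ewy; move: (w_out y ewy); rewrite !inE negb_and negbK.
    by case/orP=> // /eqP ys; rewrite -ys ewy in news.
  exists k; suff ->: color_class (recolor g s x) w k = color_class g w k by [].
  apply/setP => u; rewrite !inE.
  have [->|us] := eqVneq u s; first by rewrite (negbTE news).
  by rewrite recolor_other.
Qed.

Lemma odd_coloring_of_partial c (S : {set T}) (g : T -> 'I_c) : 4 < c ->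
  (forall s, s \in S -> deg e s <= 2) -> partial_odd_coloring S g ->
  has_odd_coloring e c.
Proof.
move=> c_gt4; have [n] := ubnP #|S|; elim: n S g => // n IH S g.
have [S0 _ _ [g_proper g_odd] | [s sS]] := set_0Vmem S.
  exists g; split=> [x y|x]; first by apply: g_proper; rewrite S0 inE.
  by apply: g_odd => y _; rewrite S0 inE.
rewrite (cardsD1 s) sS ltnS => S_small deg_S partial_g.
have [x partial_x] := partial_odd_coloring_recolor c_gt4 sS (deg_S s sS) partial_g.
apply: IH S_small _ partial_x => t; rewrite inE => /andP [_]; exact: deg_S.
Qed.

End Greedy.

Lemma card_set_split (P Q : pred T) :
  #|[set u | P u]| = #|[set u | P u && Q u]| + #|[set u | P u && ~~ Q u]|.
Proof.
rewrite -(cardsID [set u | Q u] [set u | P u]).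
by congr (_ + _); apply: eq_card => u; rewrite !inE andbC.
Qed.

Definition low_nbhd v : {set T} := v |: (Nd e 1 v :|: Nd e 2 v).
Definition high_nbs v : {set T} := [set u | e v u & 2 < deg e u].
Definition hard_nbs v : {set T} := [set u in high_nbs v | ~~ easy e u].
Definition other_nb v u := odflt u [pick y | e u y && (y != v)].

Lemma low_nbhd_deg v u : u \in low_nbhd v -> u != v -> deg e u <= 2.
Proof. by rewrite !inE => /orP [/eqP ->|/orP [] /andP [_ /eqP ->]]; rewrite ?eqxx. Qed.

Lemma notin_low_nbhd v u : u != v -> 2 < deg e u -> u \notin low_nbhd v.
Proof. by move=> uv; apply: contraTN => /low_nbhd_deg /(_ uv); rewrite ltnNge => ->. Qed.

Lemma card_high_nbs v : #|high_nbs v| = ne e v + #|hard_nbs v|.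
Proof.
rewrite /high_nbs (card_set_split _ (easy e)); congr (_ + _); apply: eq_card => u.
  by rewrite !inE /easy -andbA; case: (2 < deg e u).
by rewrite !inE andbC.
Qed.

Lemma other_nbP v w u : deg e w = 2 -> e w v -> e w u -> u != v -> other_nb v w = u.
Proof.
move=> deg_w ewv ewu uv; rewrite /other_nb; case: pickP => [y /andP [ewy yv]|]; last first.
  by move/(_ u); rewrite ewu uv.
move: deg_w; rewrite /deg (cardsD1 v) inE ewv add1n => -[] /eqP /cards1P [z rest].
have: y \in [set u | e w u] :\ v by rewrite !inE yv ewy.
have: u \in [set u | e w u] :\ v by rewrite !inE uv ewu.
by rewrite rest !inE => /eqP -> /eqP ->.
Qed.

Section Symmetric.
Hypothesis sym_e : symmetric e.

Lemma deg_nb_gt0 v u : e v u -> 0 < deg e u.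
Proof. by move=> evu; apply/card_gt0P; exists v; rewrite inE sym_e. Qed.

Lemma deg_split_low_high v : deg e v = nd e 1 v + nd e 2 v + #|high_nbs v|.
Proof.
rewrite /deg (card_set_split _ (fun u => deg e u == 1)) -addnA; congr (_ + _).
rewrite (card_set_split _ (fun u => deg e u == 2)).
congr (_ + _); apply: eq_card => u; rewrite !inE; have [evu|] //= := boolP (e v u);
  by move: (deg_nb_gt0 evu); case: (deg e u) => [|[|[|d]]].
Qed.

End Symmetric.

Section RecolorCenter.
Hypotheses (sym_e : symmetric e) (irr_e : irreflexive e).
Variables (c : nat) (v : T) (f : T -> 'I_c) (a : 'I_c).
Hypothesis v_low : odd (deg e v) || [exists w, e v w && (deg e w <= 2)].
Hypothesis f_semi_odd : semi_odd_coloring e (low_nbhd v) f.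
Hypothesis a_high : a \notin f @: high_nbs v.
Hypothesis a_hard : a \notin killer_color f v @: hard_nbs v.
Hypothesis a_other : a \notin (fun u => f (other_nb v u)) @: Nd e 2 v.

Let g := recolor f v a.

Lemma recolor_center_proper x y :
  2 < deg e x -> 2 < deg e y -> e x y -> g x != g y.
Proof.
have a_nb w : e v w -> 2 < deg e w -> a != f w.
  move=> evw deg_w; apply: contraNneq a_high => ->.
  by apply: imset_f; rewrite inE evw.
move=> deg_x deg_y exy; rewrite /g /recolor.
have [xv|xv] := eqVneq x v; have [yv|yv] := eqVneq y v.
- by rewrite xv yv irr_e in exy.
- by rewrite xv in exy; apply: a_nb.
- by rewrite yv sym_e in exy; rewrite eq_sym; apply: a_nb.
- by apply: f_semi_odd.1 exy; apply: notin_low_nbhd.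
Qed.

Lemma odd_deg_center : (forall y, e v y -> 2 < deg e y) -> odd (deg e v).
Proof.
move=> nbs_high; case/orP: v_low => // /existsP [y /andP [evy deg_y]].
by move: (nbs_high y evy); rewrite ltnNge deg_y.
Qed.

Lemma has_odd_color_deg2_nb w : e v w -> deg e w = 2 -> has_odd_color g w.
Proof.
move=> evw deg_w; exists a; suff ->: color_class g w a = [set v] by rewrite cards1.
apply/setP => u; rewrite !inE /g /recolor.
have [->|uv] := eqVneq u v; first by rewrite sym_e evw eqxx.
have [ewu|] //= := boolP (e w u); apply/negbTE; apply: contraNneq a_other => <-.
apply/imsetP; exists w; first by rewrite inE evw deg_w.
by rewrite (other_nbP deg_w _ ewu uv) // sym_e.
Qed.

Lemma has_odd_color_hard_nb w : e v w -> 2 < deg e w -> ~~ odd (deg e w) ->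
  (forall y, e w y -> 2 < deg e y) -> has_odd_color g w.
Proof.
move=> evw deg_w even_w nbs_high; have ewv : e w v by rewrite sym_e.
have hard_w : w \in hard_nbs v.
  rewrite !inE evw deg_w /easy (negbTE even_w) deg_w /=.
  by apply/existsP => -[y /andP [/nbs_high]]; rewrite ltnNge => /negbTE ->.
apply: has_odd_color_recolor; apply: contra a_hard => kill_a.
by apply/imsetP; exists w; rewrite // (killer_colorP ewv kill_a).
Qed.

Lemma has_odd_color_far w : w != v -> ~~ e v w ->
  (forall y, e w y -> 2 < deg e y) -> has_odd_color g w.
Proof.
move=> wv nevw nbs_high.
have nb_out u : e w u -> u \notin low_nbhd v.
  move=> ewu; apply: notin_low_nbhd (nbs_high u ewu).
  by apply: contraNneq nevw => uv; rewrite -uv sym_e.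
have w_out : w \notin low_nbhd v by rewrite !inE (negbTE wv) (negbTE nevw).
have w_far y : y \in low_nbhd v -> ~~ e w y by move=> yY; apply: contraL yY; apply: nb_out.
have [k odd_k] := f_semi_odd.2 w w_out w_far.
exists k; suff ->: color_class g w k =
  [set u | e w u & (u \notin low_nbhd v) && (f u == k)] by [].
apply/setP => u; rewrite !inE /g /recolor; have [ewu|] //= := boolP (e w u).
have uv : u != v by apply: contraNneq nevw => <-; rewrite sym_e.
by move: (nb_out u ewu); rewrite !inE (negbTE uv) => ->.
Qed.

Lemma partial_odd_coloring_recolor_center :
  partial_odd_coloring [set u | deg e u <= 2] g.
Proof.
split=> [x y|w]; first by rewrite !inE -!ltnNge; apply: recolor_center_proper.
move=> w_out _; have nbs_high y : e w y -> 2 < deg e y.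
  by move/w_out; rewrite inE ltnNge.
have [odd_w|even_w] := boolP (odd (deg e w)); first exact: odd_deg_has_odd_color.
have [wv|wv] := eqVneq w v.
  by rewrite wv odd_deg_center // -wv in even_w.
have [evw|nevw] := boolP (e v w); last exact: has_odd_color_far.
move: (deg_nb_gt0 sym_e evw); case deg_w: (deg e w) => [|[|[|d]]] // _.
- by rewrite deg_w in even_w.
- exact: has_odd_color_deg2_nb.
- by apply: has_odd_color_hard_nb => //; rewrite deg_w.
Qed.

End RecolorCenter.

End OddColorings.

Theorem mainTheorem8 (T : finType) (e : rel T) (c : nat) (v : T) :
  symmetric e -> irreflexive e ->
  5 <= c ->
  (odd (deg e v) || [exists w, e v w && (deg e w <= 2)]) ->
  let Y := v |: (Nd e 1 v :|: Nd e 2 v) in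
  ~ has_odd_coloring e c ->
  has_semi_odd_coloring e c Y ->
  2 * deg e v >= 2 * nd e 1 v + nd e 2 v + ne e v + c.
Proof.
move=> sym_e irr_e c_gt4 v_low Y no_odd [f f_semi_odd].
rewrite leqNgt; apply/negP => few_colors.
pose F := f @: high_nbs e v :|: killer_color e f v @: hard_nbs e v
          :|: [set f (other_nb e v u) | u in Nd e 2 v].
have F_small : #|F| < c.
  move: (leq_imset_card f (high_nbs e v)).
  move: (leq_imset_card (killer_color e f v) (hard_nbs e v)).
  move: (leq_imset_card (fun u => f (other_nb e v u)) (Nd e 2 v)) few_colors.
  by rewrite !cardsU (deg_split_low_high sym_e) card_high_nbs /nd; lia.
have [a] := exists_notin_card_lt F_small.
rewrite !inE !negb_or => /andP [/andP [a_high a_hard] a_other].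
have partial_a := partial_odd_coloring_recolor_center sym_e irr_e v_low f_semi_odd
  a_high a_hard a_other.
by apply/no_odd/(odd_coloring_of_partial sym_e irr_e c_gt4 _ partial_a) => s; rewrite inE.
Qed.
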